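(* The set of singular points of the collinearity variety $\tilde{C}_B=0$ remains invariant under Euclidean motions, i.e. under maps $(\mathbf{k}'_1,\dots,\mathbf{k}'_6)\mapsto(\mathbf{R}\mathbf{k}'_1+\mathbf{t},\dots,\mathbf{R}\mathbf{k}'_6+\mathbf{t})$ with $\mathbf{R}\in SO(2)$ and $\mathbf{t}\in\mathbb{R}^2$. Moreover, a point of $\tilde{C}_B=0$ is a singular point if and only if $\mathbf{k}'_1=\mathbf{k}'_2=\mathbf{k}'_3$.
   Context: A configuration is $K'=(\mathbf{k}'_1,\dots,\mathbf{k}'_6)$ with $\mathbf{k}'_i=(c_i,d_i)^T\in\mathbb{R}^2$, viewed as a point of $\mathbb{R}^{12}$. The given platform has anchor points (in its moving frame) $(0,0),(x_5,0),(x_6,y_6)$ with real design parameters $x_5\neq0$, $x_6$, $y_6$. Define $C_B=\det\begin{pmatrix}1&1&1\\ c_1&c_2&c_3\\ d_1&d_2&d_3\end{pmatrix}$, $E_P=\|\mathbf{k}'_5-\mathbf{k}'_4\|^2-x_5^2$, $F_3=(c_5-c_4)x_6+(d_4-d_5)y_6+(c_4-c_6)x_5$, $F_4=(d_5-d_4)x_6+(c_5-c_4)y_6+(d_4-d_6)x_5$. The variety $\tilde{C}_B=0$ is the common zero set of $C_B,E_P,F_3,F_4$ in $\mathbb{R}^{12}$ (configurations with collinear base points whose platform is a Euclidean image of the given platform). A singular point of $\tilde{C}_B=0$ is a point of it at which the gradients of $C_B,E_P,F_3,F_4$ with respect to $c_1,\dots,c_6,d_1,\dots,d_6$ are linearly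 dependent. *)

From Stdlib Require Import Reals.
From Coquelicot Require Import Coquelicot.
Open Scope R_scope.

(* A configuration K' = (k'_1,...,k'_6), k'_i = (c_i, d_i), is given by two
   coordinate functions c d : nat -> R; only the indices 1..6 are used. *)

Definition upd (f : nat -> R) (i : nat) (t : R) : nat -> R :=
  fun j => if Nat.eqb j i then t else f j.

Definition cfun := (nat -> R) -> (nat -> R) -> R.

Definition dC (P : cfun) (c d : nat -> R) (i : nat) : R :=
  Derive (fun t => P (upd c i t) d) (c i).
Definition dD (P : cfun) (c d : nat -> R) (i : nat) : R :=
  Derive (fun t => P c (upd d i t)) (d i).

(* C_B = det [[1,1,1],[c1,c2,c3],[d1,d2,d3]] (cofactor expansion along row 1) *)
Definition C_B : cfun := fun c d =>
  (c 2%nat * d 3%nat - c 3%nat * d 2%nat)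
  - (c 1%nat * d 3%nat - c 3%nat * d 1%nat)
  + (c 1%nat * d 2%nat - c 2%nat * d 1%nat).

Definition E_P (x5 : R) : cfun := fun c d =>
  (c 5%nat - c 4%nat) ^ 2 + (d 5%nat - d 4%nat) ^ 2 - x5 ^ 2.

Definition F_3 (x5 x6 y6 : R) : cfun := fun c d =>
  (c 5%nat - c 4%nat) * x6 + (d 4%nat - d 5%nat) * y6 + (c 4%nat - c 6%nat) * x5.

Definition F_4 (x5 x6 y6 : R) : cfun := fun c d =>
  (d 5%nat - d 4%nat) * x6 + (c 5%nat - c 4%nat) * y6 + (d 4%nat - d 6%nat) * x5.

Definition on_variety (x5 x6 y6 : R) (c d : nat -> R) : Prop :=
  C_B c d = 0 /\ E_P x5 c d = 0 /\ F_3 x5 x6 y6 c d = 0 /\ F_4 x5 x6 y6 c d = 0.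

Definition gradients_dependent (P1 P2 P3 P4 : cfun) (c d : nat -> R) : Prop :=
  exists l1 l2 l3 l4 : R,
    ~ (l1 = 0 /\ l2 = 0 /\ l3 = 0 /\ l4 = 0) /\
    forall i : nat, (1 <= i <= 6)%nat ->
      l1 * dC P1 c d i + l2 * dC P2 c d i + l3 * dC P3 c d i + l4 * dC P4 c d i = 0 /\
      l1 * dD P1 c d i + l2 * dD P2 c d i + l3 * dD P3 c d i + l4 * dD P4 c d i = 0.

Definition singular_point (x5 x6 y6 : R) (c d : nat -> R) : Prop :=
  on_variety x5 x6 y6 c d /\
  gradients_dependent C_B (E_P x5) (F_3 x5 x6 y6) (F_4 x5 x6 y6) c d.

(* R = [[r11, r12], [r21, r22]] lies in SO(2): R^T R = I and det R = 1 *)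
Definition in_SO2 (r11 r12 r21 r22 : R) : Prop :=
  r11 * r11 + r21 * r21 = 1 /\ r12 * r12 + r22 * r22 = 1 /\
  r11 * r12 + r21 * r22 = 0 /\ r11 * r22 - r12 * r21 = 1.

Definition motion_c (r11 r12 t1 : R) (c d : nat -> R) : nat -> R :=
  fun i => r11 * c i + r12 * d i + t1.
Definition motion_d (r21 r22 t2 : R) (c d : nat -> R) : nat -> R :=
  fun i => r21 * c i + r22 * d i + t2.

(* Only F_3 involves c_6 and only F_4 involves d_6, in both cases with
   coefficient -x5; so a linear dependence among the four gradients cannot
   involve F_3 or F_4.  On the variety |k'_5 - k'_4| = |x5| <> 0, so it cannot
   involve E_P either, and what is left is the vanishing of grad C_B, which
   says exactly k'_1 = k'_2 = k'_3.  Both this condition and the variety are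
   preserved by Euclidean motions: C_B is multiplied by det R = 1, E_P is
   unchanged, and the pair (F_3, F_4) is rotated by R. *)

From Stdlib Require Import Reals Lra Lia.
From Coquelicot Require Import Coquelicot.
Open Scope R_scope.

Definition first_three_points_coincide (c d : nat -> R) : Prop :=
  c 1%nat = c 2%nat /\ d 1%nat = d 2%nat /\ c 2%nat = c 3%nat /\ d 2%nat = d 3%nat.

Ltac partial_derivative :=
  unfold dC, dD; apply is_derive_unique;
  unfold C_B, E_P, F_3, F_4, upd; cbn [Nat.eqb]; auto_derive; [trivial | ring].

Lemma dC_C_B c d i : dC C_B c d i =
  match i with
  | 1%nat => d 2%nat - d 3%nat | 2%nat => d 3%nat - d 1%nat
  | 3%nat => d 1%nat - d 2%nat | _ => 0
  end.
Proof. destruct i as [|[|[|[|i]]]]; partial_derivative. Qed.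

Lemma dD_C_B c d i : dD C_B c d i =
  match i with
  | 1%nat => c 3%nat - c 2%nat | 2%nat => c 1%nat - c 3%nat
  | 3%nat => c 2%nat - c 1%nat | _ => 0
  end.
Proof. destruct i as [|[|[|[|i]]]]; partial_derivative. Qed.

Lemma dC_E_P x5 c d i : dC (E_P x5) c d i =
  match i with
  | 4%nat => -2 * (c 5%nat - c 4%nat) | 5%nat => 2 * (c 5%nat - c 4%nat) | _ => 0
  end.
Proof. destruct i as [|[|[|[|[|[|i]]]]]]; partial_derivative. Qed.

Lemma dD_E_P x5 c d i : dD (E_P x5) c d i =
  match i with
  | 4%nat => -2 * (d 5%nat - d 4%nat) | 5%nat => 2 * (d 5%nat - d 4%nat) | _ => 0
  end.
Proof. destruct i as [|[|[|[|[|[|i]]]]]]; partial_derivative. Qed.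

Lemma dC_F_3 x5 x6 y6 c d i : dC (F_3 x5 x6 y6) c d i =
  match i with 4%nat => x5 - x6 | 5%nat => x6 | 6%nat => - x5 | _ => 0 end.
Proof. destruct i as [|[|[|[|[|[|[|i]]]]]]]; partial_derivative. Qed.

Lemma dD_F_3 x5 x6 y6 c d i : dD (F_3 x5 x6 y6) c d i =
  match i with 4%nat => y6 | 5%nat => - y6 | _ => 0 end.
Proof. destruct i as [|[|[|[|[|[|i]]]]]]; partial_derivative. Qed.

Lemma dC_F_4 x5 x6 y6 c d i : dC (F_4 x5 x6 y6) c d i =
  match i with 4%nat => - y6 | 5%nat => y6 | _ => 0 end.
Proof. destruct i as [|[|[|[|[|[|i]]]]]]; partial_derivative. Qed.

Lemma dD_F_4 x5 x6 y6 c d i : dD (F_4 x5 x6 y6) c d i =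
  match i with 4%nat => x5 - x6 | 5%nat => x6 | 6%nat => - x5 | _ => 0 end.
Proof. destruct i as [|[|[|[|[|[|[|i]]]]]]]; partial_derivative. Qed.

Lemma grad_C_B_eq0_iff c d :
  (forall i, (1 <= i <= 6)%nat -> dC C_B c d i = 0 /\ dD C_B c d i = 0) <->
  first_three_points_coincide c d.
Proof.
  unfold first_three_points_coincide; split.
  - intros Hgrad.
    destruct (Hgrad 1%nat ltac:(lia)) as [H1c H1d].
    destruct (Hgrad 2%nat ltac:(lia)) as [H2c H2d].
    rewrite dC_C_B in H1c, H2c; rewrite dD_C_B in H1d, H2d.
    lra.
  - intros Hk i Hi; rewrite dC_C_B, dD_C_B.
    destruct i as [|[|[|[|i]]]]; lra.
Qed.

Lemma mul_eq0_reg_r (l x : R) : x <> 0 -> l * x = 0 -> l = 0.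
Proof. intros Hx Hlx; apply (Rmult_eq_reg_r x); lra. Qed.

Lemma E_P_root_mul_diff_eq0 x5 c d l : x5 <> 0 -> E_P x5 c d = 0 ->
  l * (c 5%nat - c 4%nat) = 0 -> l * (d 5%nat - d 4%nat) = 0 -> l = 0.
Proof.
  intros hx5 HE Hc Hd.
  apply (mul_eq0_reg_r l (x5 ^ 2)); [now apply pow_nonzero |].
  replace (l * x5 ^ 2) with
    (l * (c 5%nat - c 4%nat) * (c 5%nat - c 4%nat)
     + l * (d 5%nat - d 4%nat) * (d 5%nat - d 4%nat) - l * E_P x5 c d)
    by (unfold E_P; ring).
  rewrite Hc, Hd, HE; ring.
Qed.

Lemma singular_point_iff x5 x6 y6 c d : x5 <> 0 ->
  singular_point x5 x6 y6 c d <->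
  on_variety x5 x6 y6 c d /\ first_three_points_coincide c d.
Proof.
  intros hx5; unfold singular_point, gradients_dependent; split.
  - intros [Hv [l1 [l2 [l3 [l4 [Hnz Hgrad]]]]]]; split; [exact Hv |].
    destruct (Hgrad 6%nat ltac:(lia)) as [H6c H6d].
    destruct (Hgrad 5%nat ltac:(lia)) as [H5c H5d].
    rewrite dC_C_B, dC_E_P, dC_F_3, dC_F_4 in H6c, H5c.
    rewrite dD_C_B, dD_E_P, dD_F_3, dD_F_4 in H6d, H5d.
    assert (l3 = 0) by (apply (mul_eq0_reg_r l3 x5); lra).
    assert (l4 = 0) by (apply (mul_eq0_reg_r l4 x5); lra).
    subst l3 l4.
    assert (l2 = 0) by (destruct Hv as [_ [HE _]]; apply (E_P_root_mul_diff_eq0 x5 c d); lra).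
    subst l2.
    apply grad_C_B_eq0_iff; intros i Hi.
    destruct (Hgrad i Hi) as [Hc Hd].
    split; apply (mul_eq0_reg_r _ l1); lra.
  - intros [Hv Hk]; split; [exact Hv |].
    exists 1, 0, 0, 0; split; [lra |].
    intros i Hi; destruct (proj2 (grad_C_B_eq0_iff c d) Hk i Hi) as [Hc Hd].
    rewrite Hc, Hd; split; ring.
Qed.

Lemma in_SO2_rotation r11 r12 r21 r22 : in_SO2 r11 r12 r21 r22 ->
  r22 = r11 /\ r12 = - r21 /\ r11 * r11 + r21 * r21 = 1.
Proof.
  intros [e1 [e2 [e3 e4]]]; split; [| split]; [| | exact e1].
  - (* by the SO(2) relations this expression is r22, and it is r11 identically *)
    transitivity (r22 * (r11 * r11 + r21 * r21) - r11 * (r11 * r22 - r12 * r21)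
                  + r11 - r21 * (r11 * r12 + r21 * r22)).
    + rewrite e1, e3, e4; ring.
    + ring.
  - transitivity (r12 * (r11 * r11 + r21 * r21) + r21 * (r11 * r22 - r12 * r21)
                  - r21 - r11 * (r11 * r12 + r21 * r22)).
    + rewrite e1, e3, e4; ring.
    + ring.
Qed.

Lemma rotation_eq0_iff a b u v : a * a + b * b = 1 ->
  (a * u - b * v = 0 /\ b * u + a * v = 0) <-> (u = 0 /\ v = 0).
Proof.
  intros Hab; split.
  - intros [Hu Hv]; split.
    + replace u with ((a * a + b * b) * u) by (rewrite Hab; ring).
      replace ((a * a + b * b) * u) with (a * (a * u - b * v) + b * (b * u + a * v))
        by ring.
      rewrite Hu, Hv; ring.
    + replace v with ((a * a + b * b) * v) by (rewrite Hab; ring).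
      replace ((a * a + b * b) * v) with (a * (b * u + a * v) - b * (a * u - b * v))
        by ring.
      rewrite Hu, Hv; ring.
  - intros [-> ->]; split; ring.
Qed.

Section Rotation.

Variables a b t1 t2 : R.
Hypothesis Hab : a * a + b * b = 1.

Let mc c d := motion_c a (- b) t1 c d.
Let md c d := motion_d b a t2 c d.

Lemma C_B_motion c d : C_B (mc c d) (md c d) = C_B c d.
Proof.
  transitivity ((a * a + b * b) * C_B c d).
  - unfold mc, md, motion_c, motion_d, C_B; ring.
  - rewrite Hab; ring.
Qed.

Lemma E_P_motion x5 c d : E_P x5 (mc c d) (md c d) = E_P x5 c d.
Proof.
  transitivity ((a * a + b * b) * ((c 5%nat - c 4%nat) ^ 2 + (d 5%nat - d 4%nat) ^ 2)
                - x5 ^ 2).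
  - unfold mc, md, motion_c, motion_d, E_P; ring.
  - rewrite Hab; unfold E_P; ring.
Qed.

Lemma on_variety_motion x5 x6 y6 c d :
  on_variety x5 x6 y6 (mc c d) (md c d) <-> on_variety x5 x6 y6 c d.
Proof.
  unfold on_variety; rewrite C_B_motion, E_P_motion.
  replace (F_3 x5 x6 y6 (mc c d) (md c d))
    with (a * F_3 x5 x6 y6 c d - b * F_4 x5 x6 y6 c d)
    by (unfold mc, md, motion_c, motion_d, F_3, F_4; ring).
  replace (F_4 x5 x6 y6 (mc c d) (md c d))
    with (b * F_3 x5 x6 y6 c d + a * F_4 x5 x6 y6 c d)
    by (unfold mc, md, motion_c, motion_d, F_3, F_4; ring).
  rewrite (rotation_eq0_iff a b _ _ Hab); tauto.
Qed.

Lemma motion_eq_iff c d i j :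
  (mc c d i = mc c d j /\ md c d i = md c d j) <-> (c i = c j /\ d i = d j).
Proof.
  unfold mc, md, motion_c, motion_d.
  pose proof (rotation_eq0_iff a b (c i - c j) (d i - d j) Hab) as Hrot.
  split; intros [Hc Hd].
  - assert (Hij : c i - c j = 0 /\ d i - d j = 0) by (apply Hrot; split; lra).
    lra.
  - rewrite Hc, Hd; split; reflexivity.
Qed.

Lemma first_three_points_coincide_motion c d :
  first_three_points_coincide (mc c d) (md c d) <-> first_three_points_coincide c d.
Proof.
  unfold first_three_points_coincide.
  pose proof (motion_eq_iff c d 1 2) as H12.
  pose proof (motion_eq_iff c d 2 3) as H23.
  tauto.
Qed.

End Rotation.

Theorem theorem10 (x5 x6 y6 : R) (hx5 : x5 <> 0) :
  (forall (r11 r12 r21 r22 t1 t2 : R) (c d : nat -> R),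
      in_SO2 r11 r12 r21 r22 ->
      (singular_point x5 x6 y6 c d <->
       singular_point x5 x6 y6 (motion_c r11 r12 t1 c d) (motion_d r21 r22 t2 c d)))
  /\
  (forall c d : nat -> R,
      on_variety x5 x6 y6 c d ->
      (singular_point x5 x6 y6 c d <->
       (c 1%nat = c 2%nat /\ d 1%nat = d 2%nat /\
        c 2%nat = c 3%nat /\ d 2%nat = d 3%nat))).
Proof.
  split.
  - intros r11 r12 r21 r22 t1 t2 c d HR.
    destruct (in_SO2_rotation r11 r12 r21 r22 HR) as [-> [-> Hab]].
    rewrite !(singular_point_iff x5 x6 y6 _ _ hx5).
    rewrite (on_variety_motion r11 r21 t1 t2 Hab).
    rewrite (first_three_points_coincide_motion r11 r21 t1 t2 Hab).
    reflexivity.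
  - intros c d Hv.
    rewrite (singular_point_iff x5 x6 y6 c d hx5).
    unfold first_three_points_coincide; tauto.
Qed.
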